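(* Any Guesser using $m$ bits of memory (regardless of how much randomness or computation she uses) has expected number of correct guesses at most $O(\min\{\ln n, \sqrt{m}\})$ when playing against the random-shuffle Dealer.
   Context: Card guessing game: a deck consists of $n$ distinct cards labeled $1,\dots,n$ and the game lasts $n$ turns. In each turn the Dealer selects a card from the cards still in the deck and places it face down; the Guesser then names a card of $[n]$; the card is revealed and discarded. A guess is correct if it equals the drawn card; the score is the number of correct guesses. A Guesser with $m$ bits of memory keeps a memory state in $\{0,1\}^m$ between turns and consists of a (possibly randomized) guessing function (memory state $\mapsto$ guess) and a (possibly randomized) state-transition function (memory state and revealed card $\mapsto$ new memory state); she may use an unlimited amount of randomness, including random bits she can access repeatedly, which are not counted as memory. The random-shuffle Dealer arranges the deck according to a uniformly random permutation and draws the cards in that order. The expectation is over the randomness of both players. *)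

From HB Require Import structures.
From mathcomp Require Import all_boot all_order all_algebra all_fingroup.
From mathcomp Require Import all_classical all_reals all_analysis.
Set Implicit Arguments. Unset Strict Implicit. Unset Printing Implicit Defensive.
Import Order.TTheory GRing.Theory Num.Theory.
Local Open Scope ring_scope.

Definition is_dist (R : realType) (T : finType) (p : {ffun T -> R}) : Prop :=
  (forall t, 0 <= p t) /\ \sum_(t : T) p t = 1.

Definition mstate (m : nat) := {ffun 'I_m -> bool}.

(* Her (reusable,
   not-counted) random bits are modelled by a seed drawn once from a
   distribution [g_seed] on a finite seed space S; given the seed, the
   initial memory state, the (randomized) guessing function and the
   (randomized) state-transition function are fixed.  Fresh randomness at
   each use is modelled by the functions returning distributions. *)
Record guesser (R : realType) (n m : nat) (S : finType) := Guesser {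
  g_seed  : {ffun S -> R};
  g_init  : S -> mstate m;
  g_guess : S -> mstate m -> {ffun 'I_n -> R};
  g_trans : S -> mstate m -> 'I_n -> {ffun mstate m -> R}
}.

Definition valid_guesser (R : realType) (n m : nat) (S : finType)
    (G : guesser R n m S) : Prop :=
  is_dist (g_seed G) /\
  (forall r s, is_dist (g_guess G r s)) /\
  (forall r s c, is_dist (g_trans G r s c)).

Section Play.
Variables (R : realType) (n m : nat) (S : finType) (G : guesser R n m S).

Definition step (r : S) (D : {ffun mstate m -> R}) (c : 'I_n)
  : {ffun mstate m -> R} :=
  [ffun s' => \sum_(s : mstate m) D s * g_trans G r s c s'].

Fixpoint exp_score (r : S) (D : {ffun mstate m -> R}) (cs : seq 'I_n) : R :=
  match cs with
  | [::] => 0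
  | c :: cs' =>
      \sum_(s : mstate m) D s * g_guess G r s c + exp_score r (step r D c) cs'
  end.

Definition deck (sigma : {perm 'I_n}) : seq 'I_n :=
  [seq sigma i | i <- enum 'I_n].

Definition point_dist (s0 : mstate m) : {ffun mstate m -> R} :=
  [ffun s => (s == s0)%:R].

Definition expected_score_random_shuffle : R :=
  \sum_(r : S) g_seed G r *
    ((n`!%:R)^-1 *
     \sum_(sigma : {perm 'I_n}) exp_score r (point_dist (g_init G r)) (deck sigma)).

End Play.

From HB Require Import structures.
From mathcomp Require Import all_boot all_order all_algebra all_fingroup.
From mathcomp Require Import all_classical all_reals all_analysis.
From mathcomp Require Import ring lra.
Import Order.TTheory GRing.Theory Num.Theory.
Local Open Scope ring_scope.
Set Implicit Arguments. Unset Strict Implicit. Unset Printing Implicit Defensive.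

(* Fix the Guesser's seed.  Averaged over the shuffle, the card drawn at turn i
   is uniform among the n - i cards left, so whatever her memory the Guesser
   scores at most sum_(i < j) 1/(n - i) in the first j turns; for j = n this is
   H_n <= 1 + ln n.
   For the sqrt m bound let lam = sqrt m and stop this count r = n e^-lam turns
   before the end, at a cost ln (n/r) <= 1 + lam.  Given the memory state s at
   that point, exp (lam * expected score of the last r turns) is at most the
   expected product of the factors 1 + (e^lam - 1) q along the play, q being
   the probability of guessing the card drawn; as each of these cards is
   uniform among at least n - r + 1 cards, this is at most
   (1 + (e^lam - 1)/(n - r + 1))^r <= e.  Summing over the 2^m states s and
   applying Jensen, lam times the expected score of the last r turns is at
   most m + 1 = lam^2 + 1. *)

Section ExpBounds.
Variable R : realType.

Lemma jensen_expR (I : Type) (r : seq I) (wt x : I -> R) :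
  (forall i, 0 <= wt i) -> \sum_(i <- r) wt i = 1 ->
  expR (\sum_(i <- r) wt i * x i) <= \sum_(i <- r) wt i * expR (x i).
Proof.
move=> wt_ge0 wt_sum1; set mu := \sum_(i <- r) wt i * x i.
have tangent y : expR mu * (1 + (y - mu)) <= expR y.
  by rewrite -[in leRHS](subrK mu y) expRD mulrC ler_wpM2r ?expR_ge0 ?expR_ge1Dx.
apply: le_trans (ler_sum _ (fun i _ => ler_wpM2l (wt_ge0 i) (tangent (x i)))).
rewrite (eq_bigr (fun i => expR mu * (wt i + (wt i * x i - mu * wt i)))); last first.
  by move=> i _; ring.
rewrite -mulr_sumr big_split /= sumrB -mulr_sumr wt_sum1 -/mu mulr1 subrr addr0.
by rewrite mulr1.
Qed.

Lemma expR_le_chord (lam x : R) : 0 <= x <= 1 ->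
  expR (lam * x) <= 1 + (expR lam - 1) * x.
Proof.
case/andP=> x_ge0 x_le1.
have := @jensen_expR bool [:: true; false] (fun b => if b then x else 1 - x)
  (fun b => if b then lam else 0).
rewrite !big_cons !big_nil /= !addr0 mulr0 addr0 expR0 mulr1 mulrC => jensen.
apply: le_trans (jensen _ _) _.
- by case; rewrite ?subr_ge0.
- by rewrite subrKC.
- lra.
Qed.

Lemma expR_mul1B_le1 (t : R) : 0 <= t -> expR t * (1 - t) <= 1.
Proof.
move=> t_ge0; have e : expR t * expR (- t) = 1 by rewrite -expRD subrr expR0.
by rewrite -[leRHS]e ler_wpM2l ?expR_ge0 ?expR_ge1Dx.
Qed.

Lemma harmonic_le_ln (j r : nat) : (0 < r)%N ->
  \sum_(i < j) ((j + r - i)%:R)^-1 <= ln ((j + r)%:R / r%:R : R).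
Proof.
move=> r_gt0; have r_pos : 0 < r%:R :> R by rewrite ltr0n.
rewrite -ler_expR lnK ?posrE ?divr_gt0 ?ltr0n ?addn_gt0 ?r_gt0 ?orbT //.
elim: j => [|j IH]; first by rewrite big_ord0 expR0 add0n divff // gt_eqF.
rewrite big_ord_recl subn0 expRD.
under eq_bigr => i _ do rewrite lift0 addSn subSS.
set N := (j + r)%N; rewrite addSn -/N.
apply: le_trans (ler_wpM2l (expR_ge0 _) IH) _.
rewrite mulrA ler_wpM2r ?invr_ge0 ?ler0n //.
have N1_pos : 0 < N.+1%:R :> R by rewrite ltr0n.
have NE : (N%:R : R) = N.+1%:R * (1 - N.+1%:R^-1).
  by rewrite mulrBr mulr1 mulfV ?gt_eqF // -natr1 addrK.
rewrite NE mulrCA ler_piMr ?(ltW N1_pos) //.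
by apply: expR_mul1B_le1; rewrite invr_ge0 ler0n.
Qed.

Lemma ln2_ge_third : 1 / 3 <= ln (2 : R).
Proof.
rewrite -ler_expR lnK ?posrE //.
have := @expR_mul1B_le1 (1 / 3) (divr_ge0 ler01 (ler0n _ 3)).
have := expR_gt0 (1 / 3 : R); set e := expR (1 / 3); nra.
Qed.

End ExpBounds.

Lemma remC (T : eqType) (L : seq T) x y : uniq L -> rem x (rem y L) = rem y (rem x L).
Proof.
move=> uL; rewrite !rem_filter ?rem_uniq // ?filter_uniq // -!filter_predI.
by apply: eq_filter => z /=; rewrite andbC.
Qed.

Lemma sum_rem_swap (V : nmodType) (T : eqType) (L : seq T) (F : T -> T -> V) :
  uniq L ->
  \sum_(y <- L) \sum_(x <- rem y L) F x y = \sum_(x <- L) \sum_(y <- rem x L) F x y.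
Proof.
move=> uL; under eq_bigr do rewrite rem_filter // big_filter big_mkcond.
under [RHS]eq_bigr do rewrite rem_filter // big_filter big_mkcond.
rewrite exchange_big; apply: eq_bigr => x _; apply: eq_bigr => y _ /=.
by rewrite eq_sym.
Qed.

Section PermAverage.
Variables (R : realType) (T : eqType).

Definition perm_avg (L : seq T) (f : seq T -> R) : R :=
  ((size L)`!%:R)^-1 * \sum_(t <- permutations L) f t.

Lemma perm_avg_cons L f : uniq L -> (0 < size L)%N ->
  perm_avg L f =
  (size L)%:R^-1 * \sum_(x <- L) perm_avg (rem x L) (fun t => f (x :: t)).
Proof.
move=> uL L_gt0; rewrite /perm_avg (perm_big _ (permutationsE L_gt0)).
rewrite big_allpairs_dep undup_id // !mulr_sumr big_seq [RHS]big_seq.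
apply: eq_bigr => x xL; rewrite size_rem //.
case: (size L) L_gt0 => // k _ /=; rewrite factS natrM invfM mulrA //.
Qed.

Lemma eq_perm_avg L f g : (forall t, perm_eq t L -> f t = g t) ->
  perm_avg L f = perm_avg L g.
Proof.
move=> fg; rewrite /perm_avg big_seq [in RHS]big_seq; congr (_ * _).
by apply: eq_bigr => t; rewrite mem_permutations; apply: fg.
Qed.

Lemma ler_perm_avg L f g : (forall t, perm_eq t L -> f t <= g t) ->
  perm_avg L f <= perm_avg L g.
Proof.
move=> fg; rewrite /perm_avg ler_wpM2l ?invr_ge0 ?ler0n // big_seq [leRHS]big_seq.
by apply: ler_sum => t; rewrite mem_permutations; apply: fg.
Qed.

Lemma perm_avg_cst L c : uniq L -> perm_avg L (fun _ => c) = c.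
Proof.
move=> uL; rewrite /perm_avg big_const_seq count_predT size_permutations //.
by rewrite iter_addr_0 -[c *+ _]mulr_natr mulrCA mulVf ?mulr1 // pnatr_eq0 -lt0n fact_gt0.
Qed.

Lemma perm_avgD L f g :
  perm_avg L (fun t => f t + g t) = perm_avg L f + perm_avg L g.
Proof. by rewrite /perm_avg big_split mulrDr. Qed.

Lemma perm_avgZ L c f : perm_avg L (fun t => c * f t) = c * perm_avg L f.
Proof. by rewrite /perm_avg -mulr_sumr mulrCA. Qed.

Lemma perm_avg_sum (I : Type) (r : seq I) L (F : I -> seq T -> R) :
  perm_avg L (fun t => \sum_(i <- r) F i t) = \sum_(i <- r) perm_avg L (F i).
Proof. by rewrite /perm_avg exchange_big mulr_sumr. Qed.

Lemma expR_perm_avg L f : uniq L ->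
  expR (perm_avg L f) <= perm_avg L (fun t => expR (f t)).
Proof.
move=> uL; rewrite /perm_avg !mulr_sumr; apply: jensen_expR => [t|].
  by rewrite invr_ge0 ler0n.
by have := perm_avg_cst 1 uL; rewrite /perm_avg mulr_sumr mulr1.
Qed.

(* The card in position j of a uniformly shuffled deck is uniform, and given
   that card the rest of the deck is again uniformly shuffled. *)
Lemma perm_avg_drop L j (F : seq T -> R) : uniq L -> (j < size L)%N ->
  perm_avg L (fun t => F (drop j t)) =
  (size L)%:R^-1 * \sum_(x <- L) perm_avg (rem x L) (fun t => F (x :: drop j t)).
Proof.
elim: j L => [|j IH] L uL jL.
  rewrite perm_avg_cons //; congr (_ * _); apply: eq_bigr => x _.
  by apply: eq_perm_avg => t _; rewrite /= drop0.
have L_gt1 : (1 < size L)%N by apply: leq_ltn_trans jL.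
have j_lt_rem x : x \in L -> (j < size (rem x L))%N.
  by move=> xL; rewrite size_rem // -ltnS prednK // ltnW.
rewrite (perm_avg_cons _ uL (ltnW L_gt1)); congr (_ * _).
transitivity (\sum_(y <- L) (size L).-1%:R^-1 * \sum_(x <- rem y L)
    perm_avg (rem x (rem y L)) (fun t => F (x :: drop j t))).
  rewrite big_seq [RHS]big_seq; apply: eq_bigr => y yL /=.
  by rewrite IH ?rem_uniq ?j_lt_rem // size_rem.
rewrite -mulr_sumr sum_rem_swap // mulr_sumr big_seq [RHS]big_seq.
apply: eq_bigr => x xL; rewrite perm_avg_cons ?rem_uniq ?size_rem //; last first.
  by rewrite -ltnS prednK // ltnW.
by congr (_ * _); apply: eq_bigr => y _; rewrite remC.
Qed.

End PermAverage.

Lemma harmonic_le_1Dln (R : realType) (n : nat) : (0 < n)%N ->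
  \sum_(i < n) ((n - i)%:R)^-1 <= 1 + ln (n%:R : R).
Proof.
case: n => // k _; rewrite big_ord_recr /= subSnn invr1 addrC lerD2l.
by have := @harmonic_le_ln R k 1 isT; rewrite addn1 divr1.
Qed.

Lemma dist_le1 (R : realType) (T : finType) (p : {ffun T -> R}) t :
  is_dist p -> p t <= 1.
Proof.
by case=> p_ge0 <-; rewrite (bigD1 t) //= lerDl sumr_ge0.
Qed.

Lemma point_dist_dist (R : realType) m (s0 : mstate m) : is_dist (point_dist R s0).
Proof.
split=> [s|]; first by rewrite ffunE ler0n.
rewrite (bigD1 s0) //= ffunE eqxx big1 ?addr0 // => s /negbTE s_neq.
by rewrite ffunE s_neq.
Qed.

Section FixedSeed.
Variables (R : realType) (n m : nat) (S : finType) (G : guesser R n m S) (w : S).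
Hypothesis guess_dist : forall s, is_dist (g_guess G w s).
Hypothesis trans_dist : forall s c, is_dist (g_trans G w s c).

Local Notation q := (g_guess G w).
Local Notation Tr := (g_trans G w).

Lemma guess_ge0 s c : 0 <= q s c.
Proof. exact: (proj1 (guess_dist s)). Qed.

Lemma trans_ge0 s c s' : 0 <= Tr s c s'.
Proof. exact: (proj1 (trans_dist s c)). Qed.

Lemma sum_trans s c : \sum_(s' : mstate m) Tr s c s' = 1.
Proof. exact: (proj2 (trans_dist s c)). Qed.

Lemma sum_guess_le1 s L : uniq L -> \sum_(c <- L) q s c <= 1.
Proof.
move=> uL; rewrite big_uniq // -(proj2 (guess_dist s)) [leRHS](bigID (mem L)) /=.
by rewrite lerDl sumr_ge0 // => c _; apply: guess_ge0.
Qed.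

Lemma guess_le1 s c : q s c <= 1.
Proof. exact: dist_le1. Qed.

Lemma step_dist D c : is_dist D -> is_dist (step G w D c).
Proof.
case=> D_ge0 D_sum1; split=> [s'|].
  by rewrite ffunE sumr_ge0 // => s _; rewrite mulr_ge0 ?trans_ge0.
under eq_bigr do rewrite ffunE; rewrite exchange_big /= -D_sum1.
by apply: eq_bigr => s _; rewrite -mulr_sumr sum_trans mulr1.
Qed.

Definition dist_after D p := foldl (step G w) D p.

Lemma dist_after_dist D p : is_dist D -> is_dist (dist_after D p).
Proof. by elim: p D => [|c p IH] D //= HD; apply/IH/step_dist. Qed.

Lemma exp_score_cat D p1 p2 :
  exp_score G w D (p1 ++ p2) = exp_score G w D p1 + exp_score G w (dist_after D p1) p2.
Proof. by elim: p1 D => [|c p1 IH] D /=; rewrite ?add0r // IH addrA. Qed.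

Fixpoint state_score (s : mstate m) (p : seq 'I_n) : R :=
  if p is c :: p' then q s c + \sum_(s' : mstate m) Tr s c s' * state_score s' p'
  else 0.

Lemma exp_scoreE D p : exp_score G w D p = \sum_(s : mstate m) D s * state_score s p.
Proof.
elim: p D => [|c p IH] D /=; first by rewrite big1 // => s _; rewrite mulr0.
rewrite IH; under [X in _ + X]eq_bigr do rewrite ffunE mulr_suml.
rewrite exchange_big -big_split /=; apply: eq_bigr => s _.
by rewrite mulrDr mulr_sumr; congr (_ + _); apply: eq_bigr => s' _; rewrite mulrA.
Qed.

Lemma head_score_le L j D : uniq L -> (j <= size L)%N -> is_dist D ->
  perm_avg L (fun t => exp_score G w D (take j t)) <= \sum_(i < j) ((size L - i)%:R)^-1.
Proof.
elim: j L D => [|j IH] L D uL jL HD.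
  rewrite big_ord0 (eq_perm_avg (g := fun _ => 0)) ?perm_avg_cst // => t _.
  by rewrite take0.
have L_pos : 0 < (size L)%:R :> R by rewrite ltr0n (leq_ltn_trans _ jL).
rewrite perm_avg_cons ?(leq_ltn_trans _ jL) // big_ord_recl subn0 /=.
under eq_bigr do rewrite perm_avgD perm_avg_cst ?rem_uniq //.
rewrite big_split /= mulrDr lerD //.
  rewrite ler_piMr ?invr_ge0 ?ler0n // exchange_big /= -[leRHS](proj2 HD).
  apply: ler_sum => s _; rewrite -mulr_sumr ler_piMr ?sum_guess_le1 //.
  exact: (proj1 HD).
set H := \sum_(i < j) _.
apply: (@le_trans _ _ ((size L)%:R^-1 * \sum_(x <- L) H)).
  rewrite ler_wpM2l ?invr_ge0 ?ler0n // big_seq [leRHS]big_seq.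
  apply: ler_sum => x xL; apply: le_trans (IH _ _ (rem_uniq _ uL) _ (step_dist _ HD)) _.
    by rewrite size_rem // -ltnS prednK // (leq_ltn_trans _ jL).
  by rewrite size_rem //; apply: ler_sum => i _; rewrite /bump /= -subn1 -subnDA.
by rewrite big_const_seq count_predT iter_addr_0 -[H *+ _]mulr_natr mulrCA mulVf ?mulr1 ?gt_eqF.
Qed.

Fixpoint mult_score (a : R) (s : mstate m) (p : seq 'I_n) : R :=
  if p is c :: p' then
    (1 + a * q s c) * \sum_(s' : mstate m) Tr s c s' * mult_score a s' p'
  else 1.

Lemma expR_state_score_le (lam : R) s p : 0 <= lam ->
  expR (lam * state_score s p) <= mult_score (expR lam - 1) s p.
Proof.
move=> lam_ge0; elim: p s => [|c p IH] s /=; first by rewrite mulr0 expR0.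
rewrite mulrDr expRD ler_pM ?expR_ge0 //.
  by apply: expR_le_chord; rewrite guess_ge0 guess_le1.
rewrite mulr_sumr; under eq_bigr do rewrite mulrCA.
apply: le_trans (jensen_expR _ (trans_ge0 s c) (sum_trans s c)) _.
by apply: ler_sum => s' _; rewrite ler_wpM2l ?trans_ge0.
Qed.

Lemma perm_avg_mult_score_le (a : R) s r j L : 0 <= a -> uniq L -> size L = (j + r)%N ->
  perm_avg L (fun t => mult_score a s (drop j t)) <= (1 + a / j.+1%:R) ^+ r.
Proof.
move=> a_ge0; elim: r L s => [|r IH] L s uL sL.
  rewrite expr0 (eq_perm_avg (g := fun _ => 1)) ?perm_avg_cst // => t tL.
  by rewrite drop_oversize // (perm_size tL) sL addn0.
have jL : (j < size L)%N by rewrite sL addnS ltnS leq_addr.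
have L_pos : 0 < (size L)%:R :> R by rewrite ltr0n (leq_ltn_trans _ jL).
set B := 1 + a / j.+1%:R.
have first_card x : x \in L ->
    perm_avg (rem x L) (fun t => mult_score a s (x :: drop j t)) <= (1 + a * q s x) * B ^+ r.
  move=> xL; rewrite /= perm_avgZ perm_avg_sum ler_wpM2l ?addr_ge0 ?mulr_ge0 ?guess_ge0 //.
  rewrite -[leRHS]mul1r -(sum_trans s x) mulr_suml; apply: ler_sum => s' _.
  by rewrite perm_avgZ ler_wpM2l ?trans_ge0 // IH ?rem_uniq // size_rem // sL addnS.
rewrite perm_avg_drop //.
apply: (@le_trans _ _ ((size L)%:R^-1 * \sum_(x <- L) (1 + a * q s x) * B ^+ r)).
  rewrite ler_wpM2l ?invr_ge0 ?ler0n // big_seq [leRHS]big_seq.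
  by apply: ler_sum => x xL; apply: first_card.
rewrite -mulr_suml mulrA exprSr [_ * B]mulrC ler_wpM2r ?exprn_ge0 ?addr_ge0 ?divr_ge0 //.
rewrite big_split /= big_const_seq count_predT iter_addr_0 -mulr_sumr.
rewrite mulrDr mulVf ?gt_eqF // lerD2l mulrCA ler_wpM2l //.
apply: le_trans (ler_piMr _ (sum_guess_le1 s uL)) _; first by rewrite invr_ge0 ler0n.
by rewrite lef_pV2 ?posrE ?ltr0n // sL ?ler_nat addnS ?ltnS ?leq_addr.
Qed.

(* Jensen moves the average inside the exponential; bounding the weight of
   each of the 2^m possible memory states at turn j by 1 costs the factor 2^m. *)
Lemma tail_score_le (lam : R) D r j L : 0 <= lam -> uniq L -> size L = (j + r)%N -> is_dist D ->
  expR (lam * perm_avg L (fun t => exp_score G w (dist_after D (take j t)) (drop j t)))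
  <= (2 ^ m)%:R * (1 + (expR lam - 1) / j.+1%:R) ^+ r.
Proof.
move=> lam_ge0 uL sL HD.
rewrite -perm_avgZ; apply: le_trans (expR_perm_avg _ uL) _.
apply: (@le_trans _ _ (\sum_(s : mstate m)
    perm_avg L (fun t => mult_score (expR lam - 1) s (drop j t)))).
  rewrite -perm_avg_sum; apply: ler_perm_avg => t _.
  have [Dj_ge0 Dj_sum1] := dist_after_dist (take j t) HD.
  rewrite exp_scoreE mulr_sumr; under eq_bigr do rewrite mulrCA.
  apply: le_trans (jensen_expR _ Dj_ge0 Dj_sum1) _; apply: ler_sum => s _.
  apply: le_trans (expR_state_score_le _ _ lam_ge0).
  by rewrite ler_piMl ?expR_ge0 ?dist_le1 ?dist_after_dist.
have a_ge0 : 0 <= expR lam - 1 by rewrite subr_ge0 (le_trans _ (expR_ge1Dx lam)) ?lerDl.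
apply: le_trans (ler_sum _ (fun s _ => perm_avg_mult_score_le s a_ge0 uL sL)) _.
by rewrite sumr_const card_ffun card_bool card_ord mulr_natl.
Qed.

Lemma perm_avg_score_split D j L : perm_avg L (exp_score G w D) =
  perm_avg L (fun t => exp_score G w D (take j t)) +
  perm_avg L (fun t => exp_score G w (dist_after D (take j t)) (drop j t)).
Proof.
rewrite -perm_avgD; apply: eq_perm_avg => t _.
by rewrite -{1}(cat_take_drop j t) exp_score_cat.
Qed.

Lemma score_le_two_phase D (lam : R) r : is_dist D -> 0 < lam -> (0 < r <= n)%N ->
  perm_avg (enum 'I_n) (exp_score G w D) <=
  ln (n%:R / r%:R) + (m%:R + r%:R * (expR lam - 1) / (n - r).+1%:R) / lam.
Proof.
move=> HD lam_gt0 /andP[r_gt0 r_le_n].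
have uL : uniq (enum 'I_n) := enum_uniq _.
have sL : size (enum 'I_n) = (n - r + r)%N by rewrite size_enum_ord subnK.
rewrite (perm_avg_score_split D (n - r)) lerD //.
  apply: le_trans (head_score_le uL _ HD) _; first by rewrite sL leq_addr.
  by rewrite sL -[in ln _](subnK r_le_n) harmonic_le_ln.
have a_ge0 : 0 <= expR lam - 1 by rewrite subr_ge0 (le_trans _ (expR_ge1Dx lam)) ?lerDl ?ltW.
rewrite ler_pdivlMr // mulrC -ler_expR.
apply: le_trans (tail_score_le (ltW lam_gt0) uL sL HD) _.
rewrite expRD ler_pM ?ler0n ?exprn_ge0 ?addr_ge0 ?divr_ge0 //.
  rewrite -[m%:R]mulr1 expRM_natl natrX lerXn2r ?nnegrE ?ler0n ?expR_ge0 //.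
  by apply: le_trans (expR_ge1Dx 1); rewrite lerD2r.
rewrite -mulrA expRM_natl lerXn2r ?nnegrE ?addr_ge0 ?divr_ge0 ?expR_ge0 //.
exact: expR_ge1Dx.
Qed.

Lemma score_le_ln D : (2 <= n)%N -> is_dist D ->
  perm_avg (enum 'I_n) (exp_score G w D) <= 4 * ln (n%:R : R).
Proof.
move=> n_ge2 HD; have n_gt0 : (0 < n)%N by apply: leq_trans n_ge2.
rewrite (eq_perm_avg (g := fun t => exp_score G w D (take n t))); last first.
  by move=> t tL; rewrite take_oversize // (perm_size tL) size_enum_ord.
apply: le_trans (head_score_le (enum_uniq _) _ HD) _; first by rewrite size_enum_ord.
rewrite size_enum_ord; apply: le_trans (harmonic_le_1Dln R n_gt0) _.
have : 1 / 3 <= ln (n%:R : R).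
  by rewrite (le_trans (ln2_ge_third R)) // ler_ln ?posrE ?ltr0n ?ler_nat.
lra.
Qed.

(* With lam = sqrt m, the tail length r = floor (n e^-lam) makes both the
   head term ln (n / r) and the tail term (m + 1) / lam of order lam. *)
Lemma score_le_sqrt D : (1 <= m)%N -> is_dist D -> expR (Num.sqrt (m%:R : R)) <= n%:R ->
  perm_avg (enum 'I_n) (exp_score G w D) <= 4 * Num.sqrt (m%:R : R).
Proof.
move=> m_ge1 HD; set lam := Num.sqrt (m%:R : R) => e_le_n.
have lam_ge1 : 1 <= lam by rewrite -sqrtr1 ler_sqrt ?ler0n // ler1n.
have lam_sq : lam ^+ 2 = m%:R by rewrite sqr_sqrtr ?ler0n.
have e_pos := expR_gt0 lam.
have e_gt1 : 1 < expR lam by rewrite expR_gt1 (lt_le_trans ltr01 lam_ge1).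
have eN : expR (- lam) * expR lam = 1 by rewrite -expRD addNr expR0.
set x := n%:R * expR (- lam).
have x_ge1 : 1 <= x by rewrite /x -[leLHS]eN mulrC ler_wpM2r ?expR_ge0.
set r := Num.truncn x.
have /andP[r_le_x x_lt_r1] := Num.Theory.truncn_itv (le_trans ler01 x_ge1).
have r_gt0 : (0 < r)%N by rewrite Num.Theory.truncn_gt0.
have xE : x * expR lam = n%:R by rewrite /x -mulrA eN mulr1.
have rE_le_n : r%:R * expR lam <= n%:R by rewrite -xE ler_wpM2r ?expR_ge0.
have n_lt_r1E : n%:R < r.+1%:R * expR lam by rewrite -xE ltr_pM2r.
have r_le_n : (r <= n)%N.
  by rewrite -(ler_nat R) (le_trans _ rE_le_n) // ler_peMr ?ler0n ?ltW.
have r_range : (0 < r <= n)%N by apply/andP.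
apply: le_trans (score_le_two_phase HD (lt_le_trans ltr01 lam_ge1) r_range) _.
have head : ln (n%:R / r%:R) <= 1 + lam.
  have r_ge1 : 1 <= r%:R :> R by rewrite ler1n.
  have e1_ge2 : 2 <= expR 1 :> R by apply: le_trans (expR_ge1Dx 1).
  have r1E_le : r.+1%:R * expR lam <= expR 1 * expR lam * r%:R.
    by rewrite mulrAC ler_wpM2r ?expR_ge0 // -natr1; nra.
  rewrite -ler_expR lnK ?posrE ?divr_gt0 ?ltr0n ?(leq_trans r_gt0 r_le_n) //.
  rewrite expRD ler_pdivrMr ?ltr0n //.
  lra.
have tail : r%:R * (expR lam - 1) / (n - r).+1%:R <= 1.
  by rewrite ler_pdivrMr ?ltr0n // mul1r -natr1 natrB // mulrBr mulr1; lra.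
have tail_term : (m%:R + r%:R * (expR lam - 1) / (n - r).+1%:R) / lam <= 2 * lam.
  rewrite ler_pdivrMr ?(lt_le_trans ltr01 lam_ge1) // -[2 * lam * lam]mulrA -expr2 lam_sq.
  rewrite [2 * _]mulr_natl mulr2n lerD2l (le_trans tail) //.
  by rewrite -lam_sq exprn_ege1.
by apply: le_trans (lerD head tail_term) _; lra.
Qed.

Lemma score_bound D : (2 <= n)%N -> (1 <= m)%N -> is_dist D ->
  perm_avg (enum 'I_n) (exp_score G w D) <=
  4 * Num.min (ln (n%:R : R)) (Num.sqrt (m%:R : R)).
Proof.
move=> n_ge2 m_ge1 HD; case: (leP (ln (n%:R : R)) (Num.sqrt (m%:R : R))) => [_|sqrt_lt].
  exact: score_le_ln.
apply: score_le_sqrt => //.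
by rewrite -[leRHS]lnK ?posrE ?ltr0n ?ler_expR ?ltW // (leq_trans _ n_ge2).
Qed.

End FixedSeed.

Lemma deck_inj n : injective (@deck n).
Proof. by move=> s1 s2 /eq_in_map eq_s; apply/permP => i; apply/eq_s/mem_enum. Qed.

Lemma perm_eq_decks n :
  perm_eq [seq deck s | s <- index_enum {perm 'I_n}] (permutations (enum 'I_n)).
Proof.
apply: uniq_perm; first by rewrite map_inj_uniq ?index_enum_uniq //; exact: deck_inj.
  exact: permutations_uniq.
move=> t; rewrite mem_permutations; apply/mapP/idP => [[s _ ->]|perm_t].
  apply: uniq_perm; first by rewrite map_inj_uniq ?enum_uniq //; exact: perm_inj.
    exact: enum_uniq.
  move=> x; rewrite mem_enum; apply/mapP; exists (s^-1 x)%g; rewrite ?mem_enum ?permKV //.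
have size_t : size t == n by rewrite (perm_size perm_t) size_enum_ord.
have /tuple_uniqP tnth_inj : uniq (Tuple size_t) by rewrite /= (perm_uniq perm_t) enum_uniq.
exists (perm tnth_inj); first by rewrite mem_index_enum.
by rewrite /deck -[LHS](map_tnth_enum (Tuple size_t)); apply: eq_map => i; rewrite permE.
Qed.

Lemma sum_deck (R : realType) n (f : seq 'I_n -> R) :
  \sum_(s : {perm 'I_n}) f (deck s) = \sum_(t <- permutations (enum 'I_n)) f t.
Proof. by rewrite -(perm_big _ (perm_eq_decks n)) big_map. Qed.

Unset Implicit Arguments.

Theorem mainTheorem5 (R : realType) :
  exists C : R, 0 < C /\
    forall (n m : nat) (S : finType) (G : guesser R n m S),
      (2 <= n)%N -> (1 <= m)%N -> valid_guesser G ->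
      expected_score_random_shuffle G
        <= C * Num.min (ln (n%:R : R)) (Num.sqrt (m%:R : R)).
Proof.
exists 4; split=> // n m S G n_ge2 m_ge1 [[seed_ge0 seed_sum1] [guess_dist trans_dist]].
rewrite /expected_score_random_shuffle; set B := 4 * Num.min _ _.
apply: (@le_trans _ _ (\sum_(w : S) g_seed G w * B)).
  apply: ler_sum => w _; rewrite ler_wpM2l // sum_deck.
  have := score_bound (guess_dist w) (trans_dist w) n_ge2 m_ge1 (point_dist_dist R (g_init G w)).
  by rewrite /perm_avg size_enum_ord.
by rewrite -mulr_suml seed_sum1 mul1r.
Qed.
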